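(* Let \(V(G)=O\uplus I\uplus P\) be the Gallai–Edmonds decomposition of a graph \(G\). Then: (1) If \(I\cup P\) is an independent set in \(G\), then \(P=\emptyset\). (2) Let \(v,w\in O\) be two distinct vertices which lie in the same connected component of the induced subgraph \(G[O]\), and let \(G'=G[V(G)\setminus\{v,w\}]\). Then \(MM(G')\leq MM(G)-1\).
   Context: All graphs are finite, undirected and simple; \(MM(G)\) is the size of a maximum matching of \(G\). For \(X\subseteq V(G)\), \(N(X)\) is the set of vertices not in \(X\) adjacent to some vertex of \(X\). The Gallai–Edmonds decomposition of \(G\) is the partition \(V(G)=O\uplus I\uplus P\) where \(O\) is the set of vertices \(v\) such that some maximum matching of \(G\) leaves \(v\) unsaturated (not an end-point of any matching edge), \(I=N(O)\), and \(P=V(G)\setminus(I\cup O)\). *)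

From mathcomp Require Import all_boot.
Set Implicit Arguments. Unset Strict Implicit. Unset Printing Implicit Defensive.

Section Graphs.
Variable T : finType.
Variable e : rel T.

Definition simple_graph := symmetric e /\ irreflexive e.

(* M is a matching of the induced subgraph G[S]: a set of edges
   (each a 2-element vertex set {x,y} with x,y in S and e x y),
   pairwise disjoint. *)
Definition is_matching (S : {set T}) (M : {set {set T}}) : bool :=
  [forall f in M, exists x, exists y,
     [&& f == [set x; y], x != y, e x y, x \in S & y \in S]] &&
  [forall f in M, forall g in M, (f != g) ==> [disjoint f & g]].

Definition MM (S : {set T}) : nat :=
  \max_(M : {set {set T}} | is_matching S M) #|M|.

Definition is_max_matching (M : {set {set T}}) : bool :=
  is_matching setT M && (#|M| == MM setT).

Definition saturates (M : {set {set T}}) (v : T) : bool :=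
  [exists f in M, v \in f].

Definition GE_O : {set T} :=
  [set v | [exists M, is_max_matching M && ~~ saturates M v]].

Definition nbhd (X : {set T}) : {set T} :=
  [set u | (u \notin X) && [exists x in X, e u x]].

Definition GE_I : {set T} := nbhd GE_O.
Definition GE_P : {set T} := ~: (GE_I :|: GE_O).

Definition independent (X : {set T}) : bool :=
  [forall x in X, forall y in X, ~~ e x y].

Definition induced_rel (X : {set T}) : rel T :=
  fun x y => [&& e x y, x \in X & y \in X].

End Graphs.

(* (1) A vertex p of P is not in O, so every maximum matching covers it, say by
   an edge pq.  Since I :|: P is the complement of O, independence forces q into
   O, and then p is in N(O) = I, which P avoids.

   (2) It suffices that no maximum matching M leaves two distinct vertices of
   one component of G[O] uncovered.  Follow a path a, x, ... in G[O] from one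
   uncovered vertex a.  If x is uncovered, ax augments M.  Otherwise some
   maximum matching N misses x, and switching M along the M/N-alternating path
   starting at x yields a maximum matching that misses x and every vertex M
   missed, except possibly the other end z of that path.  Either z <> a and ax
   augments, or z = a and the argument continues from x. *)

From mathcomp Require Import all_boot.
Set Implicit Arguments. Unset Strict Implicit. Unset Printing Implicit Defensive.

Section Matchings.
Variables (T : finType) (e : rel T).
Hypothesis He : simple_graph e.
Implicit Types (S f g : {set T}) (M N K : {set {set T}}).

Local Notation matching := (is_matching e setT).

Lemma adj_sym x y : e x y = e y x. Proof. by case: He => sym _; rewrite sym. Qed.
Lemma adj_irr x : e x x = false. Proof. by case: He => _ irr; rewrite irr. Qed.

Lemma matching_edge S M f t : is_matching e S M -> f \in M -> t \in f ->
  exists s, [/\ f = [set t; s], t != s, e t s, s \in S & t \in S].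
Proof.
case/andP=> /forall_inP/(_ f) edges _ fM; have /existsP[x /existsP[y]] := edges fM.
case/and5P=> /eqP-> xy exy xS yS; rewrite !inE => /orP[]/eqP->.
  by exists y.
by exists x; rewrite setUC eq_sym adj_sym.
Qed.

Lemma matching_pair_neq S M x y : is_matching e S M -> [set x; y] \in M -> x != y.
Proof.
move=> mM fM; have [s [fxs xs _ _ _]] := matching_edge mM fM (set21 x y).
apply: contra xs => /eqP xy; have /setP/(_ s) := fxs.
by rewrite -xy !inE eqxx orbT orbb => /eqP->.
Qed.

Lemma matching_eq S M f g t : is_matching e S M -> f \in M -> g \in M ->
  t \in f -> t \in g -> f = g.
Proof.
case/andP=> _ /forall_inP/(_ f) disj fM gM tf tg; apply/eqP; apply: contraT => fg.
by have := disjointFr (implyP (forall_inP (disj fM) g gM) fg) tf; rewrite tg.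
Qed.

Lemma matching_subset S M K : is_matching e S M -> K \subset M -> is_matching e S K.
Proof.
case/andP=> /forall_inP edges /forall_inP disj /subsetP KM.
apply/andP; split; apply/forall_inP => f fK; first exact/edges/KM.
by apply/forall_inP => g gK; apply: (forall_inP (disj f (KM f fK))); apply: KM.
Qed.

Lemma matching_setT S M : is_matching e S M -> matching M.
Proof.
case/andP=> /forall_inP edges disj; rewrite /is_matching disj andbT.
apply/forall_inP => f /edges/existsP[x /existsP[y /and5P[fxy xy exy _ _]]].
by apply/existsP; exists x; apply/existsP; exists y; rewrite fxy xy exy !in_setT.
Qed.

Lemma saturates_edge M f t : f \in M -> t \in f -> saturates M t.
Proof. by move=> fM tf; apply/exists_inP; exists f. Qed.

Lemma saturatesU1 M g t : saturates (g |: M) t = (t \in g) || saturates M t.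
Proof.
apply/exists_inP/orP => [[f] | [tg | /exists_inP[f fM tf]]].
- by rewrite in_setU1 => /orP[/eqP-> | fM] tf; [left | right; apply: saturates_edge fM tf].
- by exists g; rewrite ?setU11.
- by exists f; rewrite // in_setU1 fM orbT.
Qed.

Lemma saturatesD1 S M f t : is_matching e S M -> f \in M ->
  saturates (M :\ f) t = (t \notin f) && saturates M t.
Proof.
move=> mM fM; apply/exists_inP/andP => [[g] | [tf /exists_inP[g gM tg]]].
  rewrite !inE => /andP[gf gM] tg; split; last exact: saturates_edge gM tg.
  by apply: contra gf => tf; rewrite (matching_eq mM gM fM tg tf).
exists g => //; rewrite !inE gM andbT.
by apply: contraNneq tf => gf; rewrite -gf.
Qed.

Lemma matching_setU1 S M a b : is_matching e S M -> a != b -> e a b -> a \in S -> b \in S ->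
  ~~ saturates M a -> ~~ saturates M b -> is_matching e S ([set a; b] |: M).
Proof.
case/andP=> /forall_inP edges /forall_inP disj ab eab aS bS nsa nsb.
have disj_ab g : g \in M -> [disjoint [set a; b] & g].
  move=> gM; rewrite -setI_eq0 -subset0; apply/subsetP => t; rewrite !inE.
  case/andP=> /orP[]/eqP-> tg; [case/negP: nsa | case/negP: nsb]; exact: saturates_edge gM tg.
apply/andP; split; apply/forall_inP => f; rewrite in_setU1 => /orP[/eqP-> | fM].
- by apply/existsP; exists a; apply/existsP; exists b; rewrite eqxx ab eab aS bS.
- exact: edges.
- apply/forall_inP => g; rewrite in_setU1 => /orP[/eqP-> | gM]; first by rewrite eqxx.
  by rewrite disj_ab ?implybT.
- apply/forall_inP => g; rewrite in_setU1 => /orP[/eqP-> | gM].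
    by rewrite disjoint_sym disj_ab ?implybT.
  exact: (forall_inP (disj f fM)).
Qed.

Lemma card_matching_le S M : is_matching e S M -> #|M| <= MM e S.
Proof. exact: (leq_bigmax_cond (P := is_matching e S)). Qed.

Lemma max_matching_exists S : exists M, is_matching e S M /\ #|M| = MM e S.
Proof.
have m0 : is_matching e S set0 by apply/andP; split; apply/forall_inP => f; rewrite inE.
case: (@arg_maxnP _ set0 (is_matching e S) (fun M => #|M|) m0) => M mM Mmax.
exists M; split => //; apply/eqP; rewrite eqn_leq card_matching_le //=.
exact/bigmax_leqP.
Qed.

Lemma matching_unsaturated_outside S M t : is_matching e S M -> t \notin S ->
  ~~ saturates M t.
Proof.
move=> mM tS; apply/negP => /exists_inP[f fM tf].
by have [s [_ _ _ _ tS']] := matching_edge mM fM tf; rewrite tS' in tS.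
Qed.

Lemma max_matching_unsaturated_nonadj M a c : is_max_matching e M ->
  ~~ saturates M a -> ~~ saturates M c -> ~~ e a c.
Proof.
case/andP=> mM /eqP szM nsa nsc; apply/negP => eac.
have ac : a != c by apply: contraTneq eac => ->; rewrite adj_irr.
have acM : [set a; c] \notin M.
  by apply: contra nsa => acM; apply: saturates_edge acM (set21 a c).
have := card_matching_le (matching_setU1 mM ac eac (in_setT a) (in_setT c) nsa nsc).
by rewrite cardsU1 acM -szM ltnn.
Qed.

Definition pivot M x y u := [set y; u] |: (M :\ [set x; y]).

Section Pivot.
Variables (M : {set {set T}}) (x y u : T).
Hypotheses (mM : matching M) (xyM : [set x; y] \in M) (nsu : ~~ saturates M u).

Lemma pivot_matching : e y u -> matching (pivot M x y u).
Proof.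
move=> eyu; have yu : y != u by apply: contraTneq eyu => ->; rewrite adj_irr.
apply: matching_setU1 (matching_subset mM (subD1set M _)) yu eyu (in_setT y) (in_setT u) _ _.
  by rewrite (saturatesD1 _ mM xyM) !inE eqxx orbT.
by rewrite (saturatesD1 _ mM xyM) negb_and nsu orbT.
Qed.

Lemma card_pivot : #|pivot M x y u| = #|M|.
Proof.
have yuM : [set y; u] \notin M :\ [set x; y].
  by apply: contra nsu => /setD1P[_ /saturates_edge]; apply; apply: set22.
by rewrite cardsU1 yuM [RHS](cardsD1 [set x; y]) xyM.
Qed.

Lemma saturates_pivot t :
  saturates (pivot M x y u) t = (t == u) || (t != x) && saturates M t.
Proof.
have xy := matching_pair_neq mM xyM.
have sMx : saturates M x by apply: saturates_edge xyM (set21 x y).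
have sMy : saturates M y by apply: saturates_edge xyM (set22 x y).
have xu : x != u by apply: contraNneq nsu => <-.
rewrite saturatesU1 (saturatesD1 _ mM xyM) !inE.
have [->|tx] := eqVneq t x; first by rewrite (negbTE xy) (negbTE xu).
by have [->|//] := eqVneq t y; rewrite /= sMy orbT.
Qed.

End Pivot.

Lemma card_pivotD M N x y u : [set x; y] \in M -> [set u; y] \in N ->
  [set u; y] \notin M -> #|pivot N u y x :\: M| < #|N :\: M|.
Proof.
move=> xyM uyN uyM; rewrite (cardsD1 [set u; y] (N :\: M)) !inE uyN uyM add1n ltnS.
apply: subset_leq_card; apply/subsetP => h.
rewrite !inE => /andP[hM /orP[/eqP hyx | /andP[-> ->]]]; last by rewrite hM.
by rewrite hyx setUC xyM in hM.
Qed.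

Lemma max_matching_exchange M N x : matching M -> is_max_matching e N ->
  saturates M x -> ~~ saturates N x ->
  exists z M', [/\ matching M', #|M'| = #|M|, ~~ saturates M' x,
    (forall t, t != z -> ~~ saturates M t -> ~~ saturates M' t) & M :&: N \subset M'].
Proof.
(* The last conjunct is the invariant that keeps the induction on #|N :\: M| going. *)
have [n] := ubnP #|N :\: M|; elim: n => // n IH in M N x *.
rewrite ltnS => ltNM mM maxN /exists_inP[f fM xf] nsNx; have [mN _] := andP maxN.
have [y [fxy xy exy _ _]] := matching_edge mM fM xf; subst f.
have /exists_inP[g gN yg] : saturates N y.
  apply: contraT => nsNy.
  by have := max_matching_unsaturated_nonadj maxN nsNx nsNy; rewrite exy.
have [u [gyu yu eyu _ _]] := matching_edge mN gN yg; subst g.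
have uyN : [set u; y] \in N by rewrite setUC.
have xyN : [set x; y] \notin N by apply: contra nsNx => /saturates_edge; apply; apply: set21.
have uyM : [set u; y] \notin M.
  rewrite setUC; apply: contra nsNx => yuM; apply: saturates_edge gN _.
  by rewrite -(matching_eq mM fM yuM (set22 x y) (set21 y u)) set21.
have ux : u != x by apply: contraNneq nsNx => <-; apply: saturates_edge gN (set22 y u).
(* Free u while keeping xy: trivially if u is uncovered (then z = u), else by
   induction after pivoting N onto xy. *)
have [z [M1 [[mM1 szM1 xyM1 nsM1u subM1] keepM1]]] : exists z M1,
    [/\ matching M1, #|M1| = #|M|, [set x; y] \in M1, ~~ saturates M1 u
       & M :&: N \subset M1] /\
    forall t, t != z -> ~~ saturates M t -> ~~ saturates M1 t && (t != u).
  have [sMu | nsMu] := boolP (saturates M u); last first.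
    by exists u, M; split=> [|t tu ->//]; split=> //; apply: subsetIl.
  have maxN1 : is_max_matching e (pivot N u y x).
    apply/andP; split; first by apply: pivot_matching; rewrite // adj_sym.
    by rewrite card_pivot // (andP maxN).2.
  have nsN1u : ~~ saturates (pivot N u y x) u.
    by rewrite saturates_pivot // eqxx (negbTE ux).
  have ltN1M := leq_trans (card_pivotD fM uyN uyM) ltNM.
  have [z [M1 [mM1 szM1 nsM1u keepM1 subM1]]] := IH _ _ _ ltN1M mM maxN1 sMu nsN1u.
  exists z, M1; split=> [|t tz nsMt]; last first.
    by rewrite keepM1 //; apply: contraNneq nsMt => ->.
  split => //.
  - by apply: (subsetP subM1); rewrite inE fM /pivot setUC in_setU1 eqxx.
  - apply/subsetP => h /setIP[hM hN]; apply: (subsetP subM1).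
    by rewrite inE hM /pivot !inE hN andbT; apply/orP; right; apply: contraNneq uyM => <-.
exists z, (pivot M1 x y u); split.
- exact: pivot_matching.
- by rewrite card_pivot.
- by rewrite saturates_pivot // eq_sym (negbTE ux) eqxx.
- move=> t tz nsMt; have /andP[nsM1t tu] := keepM1 t tz nsMt.
  by rewrite saturates_pivot // (negbTE tu) (negbTE nsM1t) andbF.
- apply/subsetP => h /setIP[hM hN]; rewrite /pivot !inE (subsetP subM1) ?inE ?hM //.
  by rewrite andbT; apply/orP; right; apply: contraNneq xyN => <-.
Qed.

Lemma max_matching_unsaturated_connect M v w : is_max_matching e M ->
  connect (induced_rel e (GE_O e)) v w ->
  ~~ saturates M v -> ~~ saturates M w -> v = w.
Proof.
move=> + /connectP[p + ->]; elim: p => [//|x p IH] in M v * => maxM /=.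
case/andP=> /and3P[evx _ xO] xp nsMv nsMl.
have [//|vl] := eqVneq v (last x p); exfalso.
have [sMx | nsMx] := boolP (saturates M x); last first.
  by have := max_matching_unsaturated_nonadj maxM nsMv nsMx; rewrite evx.
move: xO; rewrite inE => /existsP[N /andP[maxN nsNx]].
have [mM /eqP szM] := andP maxM.
have [z [M' [mM' szM' nsM'x keepM' _]]] := max_matching_exchange mM maxN sMx nsNx.
have maxM' : is_max_matching e M' by rewrite /is_max_matching mM' szM' szM eqxx.
have [zv | zv] := eqVneq z v.
  have lz : last x p != z by rewrite zv eq_sym.
  have xl := IH M' x maxM' xp nsM'x (keepM' _ lz nsMl).
  by rewrite -xl sMx in nsMl.
have vz : v != z by rewrite eq_sym.
have := max_matching_unsaturated_nonadj maxM' (keepM' v vz nsMv) nsM'x.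
by rewrite evx.
Qed.

End Matchings.

Lemma GE_IUP (T : finType) (e : rel T) : GE_I e :|: GE_P e = ~: GE_O e.
Proof.
apply/setP => t; rewrite /GE_P in_setU !in_setC in_setU negb_or.
have [|_] := boolP (t \in GE_I e) => //=.
by rewrite /GE_I /nbhd in_set => /andP[].
Qed.

Lemma GE_P_eq0 (T : finType) (e : rel T) : simple_graph e ->
  independent e (~: GE_O e) -> GE_P e = set0.
Proof.
move=> He indep; apply/eqP; rewrite -subset0; apply/subsetP => p pP.
have pO : p \notin GE_O e by rewrite -in_setC -GE_IUP in_setU pP orbT.
have [M [mM szM]] := max_matching_exists e setT.
have maxM : is_max_matching e M by rewrite /is_max_matching mM szM eqxx.
have /exists_inP[f fM pf] : saturates M p.
  by apply: contraR pO => nsMp; rewrite inE; apply/existsP; exists M; rewrite maxM.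
have [q [_ _ epq _ _]] := matching_edge He mM fM pf.
have qO : q \in GE_O e.
  apply: contraLR epq => qO.
  by apply: (forall_inP (forall_inP indep p _) q); rewrite inE.
move: pP; rewrite in_setC in_setU => /norP[pI _]; case/negP: pI.
by rewrite /GE_I /nbhd in_set pO; apply/exists_inP; exists q.
Qed.

Lemma MM_setD2_GE_O_lt (T : finType) (e : rel T) v w : simple_graph e -> v != w ->
  connect (induced_rel e (GE_O e)) v w -> MM e (setT :\: [set v; w]) < MM e setT.
Proof.
move=> He vw conn_vw.
have [M [mM <-]] := max_matching_exists e (setT :\: [set v; w]).
have unsat t : t \in [set v; w] -> ~~ saturates M t.
  by move=> tvw; apply: (matching_unsaturated_outside He mM); rewrite in_setD tvw.
rewrite ltn_neqAle card_matching_le ?(matching_setT mM) // andbT.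
apply: contra vw => szMT.
have maxM : is_max_matching e M by rewrite /is_max_matching (matching_setT mM).
by rewrite (max_matching_unsaturated_connect He maxM conn_vw) ?unsat ?set21 ?set22.
Qed.

Theorem corollary2 (T : finType) (e : rel T) (He : simple_graph e) :
  (independent e (GE_I e :|: GE_P e) -> GE_P e = set0) /\
  (forall v w : T, v \in GE_O e -> w \in GE_O e -> v != w ->
     connect (induced_rel e (GE_O e)) v w ->
     MM e (setT :\: [set v; w]) <= MM e setT - 1).
Proof.
split; first by rewrite GE_IUP; apply: GE_P_eq0.
(* Membership of v and w in O already follows from v != w and the path in G[O]. *)
move=> v w _ _ vw conn_vw; have lt_MM := MM_setD2_GE_O_lt He vw conn_vw.
by rewrite leq_subRL ?add1n // (leq_ltn_trans _ lt_MM).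
Qed.
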